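(* Let $\mathcal V$ be a finite vocabulary, $L\ge1$, $P$ a distribution on $\mathcal V^L$, and $Q_\theta$ an autoregressive model on $\mathcal V^L$ whose conditionals $Q_\theta(\cdot\mid\mathbf x_{<l})$ are strictly positive and differentiable in the parameter $\theta$. Let $\alpha\in(0,1)\cup(1,\infty)$. For $\mathbf x\in\mathcal V^L$ and $l\in\{1,\dots,L\}$ let $\widehat P^{x_l}_{<l}$ be the point mass at $x_l$ (the $\gamma$-proxy distribution with $\gamma=1$). Then for every $\theta$, $$\nabla_\theta\,\mathbb E_{\mathbf x\sim P}\Big[\sum_{l=1}^L D_\alpha\big(\widehat P^{x_l}_{<l}\,\Vert\, Q_\theta(\cdot\mid\mathbf x_{<l})\big)\Big]=\nabla_\theta \mathcal L^\alpha_{\mathrm{cDiv}}(\theta),$$ where $\mathcal L^\alpha_{\mathrm{cDiv}}(\theta)=-\mathbb E_{\mathbf x\sim P}\big[\sum_{l=1}^L \bar Q_\theta(x_l\mid\mathbf x_{<l})^{1-\alpha}\log Q_\theta(x_l\mid\mathbf x_{<l})\big]$ and $\bar Q_\theta$ denotes $Q_\theta$ treated as a constant with respect to $\theta$ when differentiating (so $\nabla_\theta\mathcal L^\alpha_{\mathrm{cDiv}}(\theta)=-\mathbb E_{\mathbf x\sim P}[\sum_l Q_\theta(x_l\mid\mathbf x_{<l})^{1-\alpha}\nabla_\theta\log Q_\theta(x_l\mid\mathbf x_{<l})]$). That is, minimizing these conditional $\alpha$-divergences is equivalent (in the sense of identical gradients) to minimizing $\mathcal L^\alpha_{\mathrm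{cDiv}}$.
   Context: The (Tsallis) $\alpha$-divergence between distributions $p,q$ on a finite set is $D_\alpha(p\Vert q)=\frac{1}{\alpha-1}\big(\sum_{x}p(x)^\alpha q(x)^{1-\alpha}-1\big)$, with the convention $0^\alpha=0$. For $\gamma\in[0,1]$, the $\gamma$-proxy of the conditional target at position $l$ given an observed token $x_l$ is $\widehat P^{x_l}_{<l}(\cdot)=\gamma\,\mathbf 1_{\{x_l=\cdot\}}+(1-\gamma)Q_\theta(\cdot\mid\mathbf x_{<l})$. *)

From HB Require Import structures.
From mathcomp Require Import all_boot all_order all_algebra.
From mathcomp Require Import all_classical all_reals all_analysis.
Set Implicit Arguments. Unset Strict Implicit. Unset Printing Implicit Defensive.
Import Order.TTheory GRing.Theory Num.Theory.
Import numFieldNormedType.Exports.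
Local Open Scope ring_scope.

(* Tsallis alpha-divergence between p, q : V -> R on a finite set V.
   powR satisfies 0 `^ a = 0 for a <> 0, matching the convention 0^alpha = 0. *)
Definition alpha_div (R : realType) (V : finType) (alpha : R) (p q : V -> R) : R :=
  (alpha - 1)^-1 * (\sum_(x : V) p x `^ alpha * q x `^ (1 - alpha) - 1).

Definition gamma_proxy (R : realType) (V : finType) (gamma : R) (xl : V)
  (q : V -> R) : V -> R :=
  fun y => gamma * (xl == y)%:R + (1 - gamma) * q y.

(* An autoregressive model is given by its conditionals Q theta s v =
   Q_theta(v | s), where s : seq V is the prefix x_{<l} (of size l). *)

Definition cond_div_objective (R : realType) (V : finType) (L d : nat)
  (P : L.-tuple V -> R) (Q : 'rV[R]_d -> seq V -> V -> R) (alpha : R)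
  (theta : 'rV[R]_d) : R :=
  \sum_(x : L.-tuple V) P x *
    \sum_(l < L) alpha_div alpha
        (gamma_proxy 1 (tnth x l) (Q theta (take l x)))
        (Q theta (take l x)).

(* L_cDiv with stop-gradient: the factor Qbar is evaluated at the frozen
   parameter theta0, the log-term at the live parameter theta. *)
Definition cDiv_loss_sg (R : realType) (V : finType) (L d : nat)
  (P : L.-tuple V -> R) (Q : 'rV[R]_d -> seq V -> V -> R) (alpha : R)
  (theta0 theta : 'rV[R]_d) : R :=
  - \sum_(x : L.-tuple V) P x *
    \sum_(l < L) (Q theta0 (take l x) (tnth x l)) `^ (1 - alpha) *
                 ln (Q theta (take l x) (tnth x l)).

(* With gamma = 1 the proxy is the point mass at x_l, so each conditional
   divergence collapses to (alpha - 1)^-1 (q^(1 - alpha) - 1), q being the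
   model probability of the observed token.  As a function of q its derivative
   is -q^(-alpha), which is also the derivative of -q0^(1 - alpha) ln q at
   q = q0.  By the chain rule the two objectives therefore have the same
   differential term by term, and differentials add up over finite sums. *)
From HB Require Import structures.
From mathcomp Require Import all_boot all_order all_algebra.
From mathcomp Require Import all_classical all_reals all_analysis.
From mathcomp Require Import ring.
Set Implicit Arguments. Unset Strict Implicit. Unset Printing Implicit Defensive.
Import Order.TTheory GRing.Theory Num.Theory.
Import numFieldNormedType.Exports.
Local Open Scope ring_scope.

Lemma linear_ext (R : pzRingType) (U W : lmodType R) (f g : {linear U -> W}) :
  f =1 g -> f = g.
Proof.
move=> /funext; case: f => f [[fA] [fZ]]; case: g => g [[gA] [gZ]] /= fg.
by subst g; rewrite (Prop_irrelevance fA gA) (Prop_irrelevance fZ gZ).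
Qed.

Section SameDifferential.
Variables (R : realType) (V W : normedModType R).

Definition same_diff (f g : V -> W) (x : V) :=
  [/\ differentiable f x, differentiable g x & 'd f x = 'd g x].

(* Rewriting with an equation between differentials makes the unifier unfold
   [diff] on every failed match, which is very slow: the equations are applied
   through [f_equal] instead. *)
Lemma same_diffD (f1 g1 f2 g2 : V -> W) x :
  same_diff f1 g1 x -> same_diff f2 g2 x -> same_diff (f1 + f2) (g1 + g2) x.
Proof.
move=> [df1 dg1 e1] [df2 dg2 e2]; split; [exact: differentiableD..|].
apply: linear_ext => v.
rewrite [in LHS](diffD df1 df2) [in RHS](diffD dg1 dg2) /=.
exact: (f_equal2 (fun a b : {linear V -> W} => a v + b v) e1 e2).
Qed.

Lemma same_diffZ k (f g : V -> W) x :
  same_diff f g x -> same_diff (k *: f) (k *: g) x.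
Proof.
move=> [df dg e]; split; [exact: differentiableZ..|].
apply: linear_ext => v.
rewrite [in LHS](diffZ k df) [in RHS](diffZ k dg) /=.
exact: (f_equal (fun a : {linear V -> W} => k *: a v) e).
Qed.

Lemma same_diff_sum (I : Type) (r : seq I) (F G : I -> V -> W) x :
  (forall i, same_diff (F i) (G i) x) ->
  same_diff (\sum_(i <- r) F i) (\sum_(i <- r) G i) x.
Proof.
move=> FG; apply: (big_ind2 (fun f g => same_diff f g x)).
- by split; [exact: differentiable_cst..|].
- by move=> f1 g1 f2 g2; apply: same_diffD.
- by move=> i _; exact: FG.
Qed.

End SameDifferential.

Lemma same_diff_comp (R : realType) (V : normedModType R) (q : V -> R)
    (h1 h2 : R -> R) (x : V) (c : R) :
  differentiable q x -> is_derive (q x) 1 h1 c -> is_derive (q x) 1 h2 c ->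
  same_diff (h1 \o q) (h2 \o q) x.
Proof.
move=> dq dh1 dh2.
have d1 : differentiable h1 (q x) by apply/derivable1_diffP; case: dh1.
have d2 : differentiable h2 (q x) by apply/derivable1_diffP; case: dh2.
split; [exact: differentiable_comp..|].
apply: linear_ext => v.
rewrite [in LHS](diff_comp dq d1) [in RHS](diff_comp dq d2) /=.
rewrite [in LHS](diff1E d1) [in RHS](diff1E d2).
rewrite [in LHS]derive1E [in RHS]derive1E.
by case: dh1 => _ ->; case: dh2 => _ ->.
Qed.

Lemma alpha_div_dirac (R : realType) (V : finType) (alpha : R) (v : V)
    (q : V -> R) :
  alpha != 0 ->
  alpha_div alpha (gamma_proxy 1 v q) q =
  (alpha - 1)^-1 * (q v `^ (1 - alpha) - 1).
Proof.
move=> alpha_neq0; rewrite /alpha_div (bigD1 v) //= big1 => [|y yv].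
  by rewrite /gamma_proxy eqxx subrr mul0r mul1r !addr0 /= powR1 mul1r.
rewrite /gamma_proxy subrr mul0r mul1r addr0 eq_sym (negbTE yv) /=.
by rewrite powR0 ?mul0r.
Qed.

Section PowerDerivatives.
Variables (R : realType) (alpha y : R).
Hypothesis y_gt0 : 0 < y.

Lemma is_derive_alpha_div_dirac : alpha != 1 ->
  is_derive y 1 (fun z => (alpha - 1)^-1 * (z `^ (1 - alpha) - 1))
    (- y `^ (- alpha)).
Proof.
move=> alpha_neq1.
have -> : (fun z => (alpha - 1)^-1 * (z `^ (1 - alpha) - 1)) =
    (alpha - 1)^-1 \*: ((@powR R)^~ (1 - alpha) - cst 1) by [].
apply: is_derive_eq.
  exact: is_deriveZ
    (is_deriveB (is_derive1_powR _ y_gt0) (is_derive_cst _ _ _)).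
have -> : 1 - alpha - 1 = - alpha by ring.
rewrite subr0 /GRing.scale /=.
by field; rewrite subr_eq0.
Qed.

Lemma is_derive_frozen_weight_ln :
  is_derive y 1 (fun z => - y `^ (1 - alpha) * ln z) (- y `^ (- alpha)).
Proof.
have -> : (fun z => - y `^ (1 - alpha) * ln z) =
    (- y `^ (1 - alpha)) \*: (@ln R) by [].
apply: is_derive_eq; first exact: is_deriveZ (is_derive1_ln y_gt0).
rewrite [in RHS](_ : - alpha = 1 - alpha - 1); last by ring.
rewrite /GRing.scale /= mulNr [in RHS]powRB ?powRr1 ?ltW //.
by apply/implyP => _; rewrite gt_eqF.
Qed.

End PowerDerivatives.

Theorem theorem5p4 (R : realType) (V : finType) (L d : nat)
  (P : L.-tuple V -> R) (Q : 'rV[R]_d -> seq V -> V -> R) (alpha : R) :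
  (1 <= L)%N ->
  (forall x, 0 <= P x) -> \sum_(x : L.-tuple V) P x = 1 ->
  (forall theta (s : seq V), (size s < L)%N ->
     (forall v, 0 < Q theta s v) /\ \sum_(v : V) Q theta s v = 1) ->
  (forall (s : seq V) (v : V) theta, (size s < L)%N ->
     differentiable (fun t => Q t s v) theta) ->
  0 < alpha -> alpha != 1 ->
  forall theta : 'rV[R]_d,
    differentiable (cond_div_objective P Q alpha) theta /\
    differentiable (cDiv_loss_sg P Q alpha theta) theta /\
    'd (cond_div_objective P Q alpha) theta =
    'd (cDiv_loss_sg P Q alpha theta) theta.
Proof.
(* The identity holds term by term: neither P nor Q needs to be normalised. *)
move=> _ _ _ Q_pos Q_diff alpha_gt0 alpha_neq1 theta.
pose q (x : L.-tuple V) (l : 'I_L) t := Q t (take l x) (tnth x l).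
have prefix_lt (x : L.-tuple V) (l : 'I_L) : (size (take l x) < L)%N.
  by rewrite size_take size_tuple !ltn_ord.
have obj_sum : cond_div_objective P Q alpha = \sum_(x : L.-tuple V) P x *:
    \sum_(l < L) ((fun z => (alpha - 1)^-1 * (z `^ (1 - alpha) - 1)) \o q x l).
  apply/funext => t; rewrite /cond_div_objective fct_sumE.
  apply: eq_bigr => x _.
  rewrite fct_sumE; congr (_ * _); apply: eq_bigr => l _.
  by rewrite alpha_div_dirac ?gt_eqF.
have loss_sum : cDiv_loss_sg P Q alpha theta = \sum_(x : L.-tuple V) P x *:
    \sum_(l < L) ((fun z => - q x l theta `^ (1 - alpha) * ln z) \o q x l).
  apply/funext => t; rewrite /cDiv_loss_sg fct_sumE -sumrN.
  apply: eq_bigr => x _.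
  rewrite fct_sumE /= -mulrN -sumrN; congr (_ * _); apply: eq_bigr => l _.
  by rewrite mulNr.
suff [obj_diff loss_diff d_eq] :
    same_diff (cond_div_objective P Q alpha)
      (cDiv_loss_sg P Q alpha theta) theta.
  by split; [|split].
rewrite obj_sum loss_sum; apply: same_diff_sum => x; apply: same_diffZ.
apply: same_diff_sum => l.
have q_gt0 : 0 < q x l theta by apply: (Q_pos _ _ (prefix_lt x l)).1.
apply: same_diff_comp (Q_diff _ _ _ (prefix_lt x l)) _ _.
- exact: is_derive_alpha_div_dirac q_gt0 alpha_neq1.
- exact: is_derive_frozen_weight_ln q_gt0.
Qed.
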